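(* The only LW-surfaces of Riemann-type are: (1) the surfaces of revolution; (2) the classical Riemann examples of minimal surfaces.
   Context: A surface $S$ in Euclidean space $\mathbb{R}^3$ with principal curvatures $\kappa_1,\kappa_2$ is called a linear Weingarten surface (LW-surface) if $\kappa_1=m\,\kappa_2+n$ for real constants $m,n$, where $m\neq 0$ is assumed (so that no principal curvature vanishes identically) and the umbilical case ($\kappa_1=\kappa_2$) is excluded. A cyclic surface is a surface determined by a smooth uniparametric family of pieces of circles; it is of Riemann-type if the planes containing the circles of the foliation are parallel. Locally such a surface can be written as $X(u,v)=(a(u),b(u),u)+r(u)(\cos v,\sin v,0)$ with smooth $a,b$ and radius $r>0$; it is a surface of revolution iff $a,b$ are constant. The classical Riemann examples are the minimal surfaces ($(m,n)=(-1,0)$) of this form with $a'=\lambda r^2$, $b'=\mu r^2$ for constants $\lambda,\mu$ with $\lambda^2+\mu^2\neq 0$, and $1+(\lambda^2+\mu^2)r^4+r'^2-r r''=0$ (the case $\lambda^2+\mu^2=0$ giving the catenoid). *)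

From Stdlib Require Import Reals.
From Coquelicot Require Import Coquelicot.
Open Scope R_scope.

Definition vec3 : Type := (R * R * R)%type.
Definition v1 (p : vec3) : R := fst (fst p).
Definition v2 (p : vec3) : R := snd (fst p).
Definition v3 (p : vec3) : R := snd p.
Definition dot (p q : vec3) : R := v1 p * v1 q + v2 p * v2 q + v3 p * v3 q.
Definition cross (p q : vec3) : vec3 :=
  (v2 p * v3 q - v3 p * v2 q, v3 p * v1 q - v1 p * v3 q, v1 p * v2 q - v2 p * v1 q).

Definition surface : Type := R -> R -> vec3.
Definition Xu (X : surface) : surface := fun u v =>
  (Derive (fun t => v1 (X t v)) u, Derive (fun t => v2 (X t v)) u,
   Derive (fun t => v3 (X t v)) u).
Definition Xv (X : surface) : surface := fun u v =>
  (Derive (fun t => v1 (X u t)) v, Derive (fun t => v2 (X u t)) v,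
   Derive (fun t => v3 (X u t)) v).

Definition fE (X : surface) u v := dot (Xu X u v) (Xu X u v).
Definition fF (X : surface) u v := dot (Xu X u v) (Xv X u v).
Definition fG (X : surface) u v := dot (Xv X u v) (Xv X u v).
Definition fW2 (X : surface) u v := fE X u v * fG X u v - fF X u v ^ 2.

Definition unit_normal (X : surface) u v : vec3 :=
  let c := cross (Xu X u v) (Xv X u v) in
  let l := sqrt (dot c c) in (v1 c / l, v2 c / l, v3 c / l).
Definition se (X : surface) u v := dot (Xu (Xu X) u v) (unit_normal X u v).
Definition sf (X : surface) u v := dot (Xv (Xu X) u v) (unit_normal X u v).
Definition sg (X : surface) u v := dot (Xv (Xv X) u v) (unit_normal X u v).

(** Gauss and mean curvature, and the two principal curvatures
    kappa_plus >= kappa_minus (the roots of k^2 - 2 H k + K = 0). *)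
Definition gaussK (X : surface) u v :=
  (se X u v * sg X u v - sf X u v ^ 2) / fW2 X u v.
Definition meanH (X : surface) u v :=
  (se X u v * fG X u v - 2 * sf X u v * fF X u v + sg X u v * fE X u v)
  / (2 * fW2 X u v).
Definition kappa_plus (X : surface) u v :=
  meanH X u v + sqrt (meanH X u v ^ 2 - gaussK X u v).
Definition kappa_minus (X : surface) u v :=
  meanH X u v - sqrt (meanH X u v ^ 2 - gaussK X u v).

(** Cyclic surface of Riemann type:
    X(u,v) = (a(u), b(u), u) + r(u) (cos v, sin v, 0). *)
Definition riemann_cyclic (a b r : R -> R) : surface := fun u v =>
  (a u + r u * cos v, b u + r u * sin v, u).

Definition smooth_on (f : R -> R) (u0 u1 : R) : Prop :=
  forall (k : nat) (x : R), u0 < x < u1 -> ex_derive_n f k x.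

(** Linear Weingarten condition on the domain D of the parameters:
    kappa_1 = m kappa_2 + n with m <> 0, for some labelling
    (kappa_1, kappa_2) of the two principal curvatures, the labelling being
    the same on the whole (connected) domain. *)
Definition is_LW (X : surface) (D : R -> R -> Prop) : Prop :=
  exists m n : R, m <> 0 /\
   ((forall u v, D u v -> kappa_plus X u v = m * kappa_minus X u v + n) \/
    (forall u v, D u v -> kappa_minus X u v = m * kappa_plus X u v + n)).

Definition umbilic_free (X : surface) (D : R -> R -> Prop) : Prop :=
  forall u v, D u v -> kappa_plus X u v <> kappa_minus X u v.

From Stdlib Require Import Reals Lra Lia Classical.
From Coquelicot Require Import Coquelicot.
Open Scope R_scope.

(* Fix u.  Writing a', b', r', ... for the derivatives at u, one has
   EG - F^2 = r^2 (1 + P^2) with P = r' + a' cos v + b' sin v, the second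
   fundamental form has f = 0, and H, K are rational in cos v, sin v and
   sqrt (1 + P^2).  Since the principal curvatures are H +- sqrt (H^2 - K),
   the relation k1 = m k2 + n implies
   (1 + m)^2 (H^2 - K) = (n - (1 - m) H)^2, and clearing denominators turns it
   into a trigonometric identity in v on an interval.  Such an identity forces
   all Fourier coefficients to vanish (apply d^2/dv^2 + N^2 and induct on the
   degree N).  If a'(u), b'(u) are not both zero, comparing top harmonics gives
   n = 0 (degree 12, after squaring away the root) and then m = -1 (degree 3,
   then the harmonics of degree <= 2).  So H = 0, and the vanishing of its
   numerator for all v is the system 1 + a'^2 + b'^2 + r'^2 - r r'' = 0,
   r a'' = 2 r' a', r b'' = 2 r' b'; the last two say that a'/r^2 and b'/r^2
   are constant.  Otherwise a' = b' = 0 on the whole interval: a surface of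
   revolution. *)

Lemma pow_eq_0 x k : x ^ k = 0 -> x = 0.
Proof.
intro H; destruct (Req_dec x 0) as [Hx|Hx]; [exact Hx | destruct (pow_nonzero x k Hx H)].
Qed.

Lemma Rmult_pair_eq_0 x p q : p ^ 2 + q ^ 2 <> 0 -> x * p = 0 -> x * q = 0 -> x = 0.
Proof.
intros Hpq Hp Hq; destruct (Req_dec x 0) as [Hx|Hx]; [exact Hx|].
destruct (Rmult_integral _ _ Hp), (Rmult_integral _ _ Hq); try contradiction.
exfalso; apply Hpq; subst; ring.
Qed.

(** * Trigonometric polynomials *)

Definition harmonic (k : nat) (A B v : R) : R :=
  A * cos (INR k * v) + B * sin (INR k * v).

Definition trig_sum (N : nat) (a b : nat -> R) (v : R) : R :=
  sum_f_R0 (fun k => harmonic k (a k) (b k) v) N.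

Definition trig_top (N : nat) (A B : R) (f : R -> R) : Prop :=
  exists a b : nat -> R, a N = A /\ b N = B /\ forall v, f v = trig_sum N a b v.

Definition trig_deg (N : nat) (f : R -> R) : Prop := exists A B, trig_top N A B f.

Lemma harmonic_0 A B v : harmonic 0 A B v = A.
Proof. unfold harmonic; simpl; rewrite Rmult_0_l, cos_0, sin_0; ring. Qed.

Lemma trig_sum_S N a b v :
  trig_sum (S N) a b v = trig_sum N a b v + harmonic (S N) (a (S N)) (b (S N)) v.
Proof. reflexivity. Qed.

Lemma trig_top_ext N A B f g :
  (forall v, f v = g v) -> trig_top N A B f -> trig_top N A B g.
Proof.
intros Hfg [a [b [Ha [Hb Hf]]]]; exists a, b; repeat split; auto.
intro v; rewrite <- Hfg; auto.
Qed.

Lemma trig_deg_ext N f g : (forall v, f v = g v) -> trig_deg N f -> trig_deg N g.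
Proof. intros Hfg [A [B Hf]]; exists A, B; eapply trig_top_ext; eauto. Qed.

Lemma trig_top_harmonic N A B : trig_top N A B (harmonic N A B).
Proof.
exists (fun k => if Nat.eqb k N then A else 0), (fun k => if Nat.eqb k N then B else 0).
rewrite Nat.eqb_refl; repeat split; intro v.
destruct N as [|N]; [reflexivity|].
rewrite trig_sum_S, Nat.eqb_refl; unfold trig_sum.
rewrite sum_eq_R0; [ring|].
intros k Hk; replace (Nat.eqb k (S N)) with false by (symmetry; apply Nat.eqb_neq; lia).
unfold harmonic; ring.
Qed.

Lemma trig_top_1 c A B : trig_top 1 A B (fun v => c + A * cos v + B * sin v).
Proof.
exists (fun k => match k with 0 => c | _ => A end), (fun k => match k with 0 => 0 | _ => B end).
repeat split; intro v; unfold trig_sum; simpl sum_f_R0.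
rewrite harmonic_0; unfold harmonic; change (INR 1) with 1; rewrite !Rmult_1_l; ring.
Qed.

Lemma trig_top_0 A B f : trig_top 0 A B f -> forall v, f v = A.
Proof. intros [a [b [Ha [_ Hf]]]] v; rewrite Hf, <- Ha; apply harmonic_0. Qed.

Lemma trig_top_succ N f : trig_deg N f -> trig_top (S N) 0 0 f.
Proof.
intros [A [B [a [b [_ [_ Hf]]]]]].
exists (fun k => if Nat.eqb k (S N) then 0 else a k),
       (fun k => if Nat.eqb k (S N) then 0 else b k).
rewrite Nat.eqb_refl; repeat split; intro v.
rewrite Hf, trig_sum_S, Nat.eqb_refl.
replace (harmonic (S N) 0 0 v) with 0 by (unfold harmonic; ring).
rewrite Rplus_0_r; apply sum_eq; intros k Hk.
replace (Nat.eqb k (S N)) with false by (symmetry; apply Nat.eqb_neq; lia).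
reflexivity.
Qed.

Lemma trig_top_lift N M f : trig_deg N f -> (N < M)%nat -> trig_top M 0 0 f.
Proof.
intros Hf HM; induction HM as [|M HM IH]; apply trig_top_succ; [exact Hf|].
exists 0, 0; exact IH.
Qed.

Lemma trig_deg_le N M f : trig_deg N f -> (N <= M)%nat -> trig_deg M f.
Proof.
intros Hf HM; destruct (Nat.eq_dec N M) as [<-|HNM]; [exact Hf|].
exists 0, 0; apply (trig_top_lift N); [exact Hf | lia].
Qed.

Lemma trig_top_plus N A B C D f g :
  trig_top N A B f -> trig_top N C D g ->
  trig_top N (A + C) (B + D) (fun v => f v + g v).
Proof.
intros [a [b [<- [<- Hf]]]] [c [d [<- [<- Hg]]]].
exists (fun k => a k + c k), (fun k => b k + d k); repeat split; intro v.
rewrite Hf, Hg; unfold trig_sum; rewrite <- sum_plus.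
apply sum_eq; intros; unfold harmonic; ring.
Qed.

Lemma trig_top_scal N A B x f :
  trig_top N A B f -> trig_top N (x * A) (x * B) (fun v => x * f v).
Proof.
intros [a [b [<- [<- Hf]]]].
exists (fun k => x * a k), (fun k => x * b k); repeat split; intro v.
rewrite Hf; unfold trig_sum; rewrite scal_sum.
apply sum_eq; intros; unfold harmonic; ring.
Qed.

Lemma trig_deg_plus N f g : trig_deg N f -> trig_deg N g -> trig_deg N (fun v => f v + g v).
Proof. intros [A [B Hf]] [C [D Hg]]; exists (A + C), (B + D); apply trig_top_plus; auto. Qed.

Lemma trig_deg_scal N x f : trig_deg N f -> trig_deg N (fun v => x * f v).
Proof. intros [A [B Hf]]; exists (x * A), (x * B); apply trig_top_scal; auto. Qed.

Lemma trig_top_split N A B f : trig_top (S N) A B f ->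
  exists g, trig_deg N g /\ forall v, f v = g v + harmonic (S N) A B v.
Proof.
intros [a [b [<- [<- Hf]]]]; exists (trig_sum N a b); split.
- exists (a N), (b N), a, b; auto.
- intro v; rewrite Hf; reflexivity.
Qed.

(* Leading harmonics multiply like the complex numbers [A + iB] and [C + iD],
   up to a factor [1/2]. *)
Definition top_re (A B C D : R) : R := (A * C - B * D) / 2.
Definition top_im (A B C D : R) : R := (A * D + B * C) / 2.

Lemma top_norm A B C D :
  top_re A B C D ^ 2 + top_im A B C D ^ 2 = (A ^ 2 + B ^ 2) * (C ^ 2 + D ^ 2) / 4.
Proof. unfold top_re, top_im; field. Qed.

Lemma top_norm_neq_0 A B C D : A ^ 2 + B ^ 2 <> 0 -> C ^ 2 + D ^ 2 <> 0 ->
  top_re A B C D ^ 2 + top_im A B C D ^ 2 <> 0.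
Proof.
rewrite top_norm; intros HA HC E.
apply (Rmult_integral_contrapositive_currified _ _ HA HC); lra.
Qed.

Lemma top_mult_eq_0 A B C D : top_re A B C D = 0 -> top_im A B C D = 0 ->
  A = 0 /\ B = 0 \/ C = 0 /\ D = 0.
Proof.
intros H1 H2.
assert (E : (A ^ 2 + B ^ 2) * (C ^ 2 + D ^ 2) = 0).
{ transitivity (4 * (top_re A B C D ^ 2 + top_im A B C D ^ 2)).
  - rewrite top_norm; field.
  - rewrite H1, H2; ring. }
destruct (Rmult_integral _ _ E); [left | right]; split; nra.
Qed.

Lemma harmonic_mult j k A B C D v :
  harmonic j A B v * harmonic k C D v =
  harmonic (j + k) (top_re A B C D) (top_im A B C D) v +
  ((A * C + B * D) / 2 * cos (INR j * v - INR k * v) +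
   (B * C - A * D) / 2 * sin (INR j * v - INR k * v)).
Proof.
unfold harmonic, top_re, top_im.
replace (INR (j + k) * v) with (INR j * v + INR k * v) by (rewrite plus_INR; ring).
rewrite cos_plus, sin_plus, cos_minus, sin_minus; field.
Qed.

Lemma trig_deg_difference_harmonic j k c d : exists l, (l = j - k \/ l = k - j)%nat /\
  trig_deg l (fun v => c * cos (INR j * v - INR k * v) + d * sin (INR j * v - INR k * v)).
Proof.
destruct (Compare_dec.le_lt_dec k j) as [Hkj|Hjk].
- exists (j - k)%nat; split; [left; reflexivity|]; exists c, d.
  eapply trig_top_ext; [|apply trig_top_harmonic]; intro v.
  unfold harmonic; rewrite minus_INR, Rmult_minus_distr_r by lia; reflexivity.
- exists (k - j)%nat; split; [right; reflexivity|]; exists c, (- d).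
  eapply trig_top_ext; [|apply trig_top_harmonic]; intro v.
  unfold harmonic; rewrite minus_INR by lia.
  replace (INR j * v - INR k * v) with (- ((INR k - INR j) * v)) by ring.
  rewrite cos_neg, sin_neg; ring.
Qed.

Lemma trig_deg_harmonic_mult j k A B C D :
  trig_deg (j + k) (fun v => harmonic j A B v * harmonic k C D v).
Proof.
destruct (trig_deg_difference_harmonic j k ((A * C + B * D) / 2) ((B * C - A * D) / 2))
  as [l [Hl Hdiff]].
eapply trig_deg_ext; [intro v; symmetry; apply harmonic_mult|].
apply trig_deg_plus; [eexists; eexists; apply trig_top_harmonic|].
apply (trig_deg_le l); [exact Hdiff | lia].
Qed.

Lemma trig_top_harmonic_mult j k A B C D : (1 <= j)%nat -> (1 <= k)%nat ->
  trig_top (j + k) (top_re A B C D) (top_im A B C D)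
    (fun v => harmonic j A B v * harmonic k C D v).
Proof.
intros Hj Hk.
destruct (trig_deg_difference_harmonic j k ((A * C + B * D) / 2) ((B * C - A * D) / 2))
  as [l [Hl Hdiff]].
pose proof (trig_top_plus _ _ _ _ _ _ _
  (trig_top_harmonic (j + k) (top_re A B C D) (top_im A B C D))
  (trig_top_lift l (j + k) _ Hdiff ltac:(lia))) as H.
rewrite !Rplus_0_r in H; eapply trig_top_ext; [|exact H].
intro v; symmetry; apply harmonic_mult.
Qed.

Lemma trig_deg_harmonic_mult_l j A B M g : trig_deg M g ->
  trig_deg (j + M) (fun v => harmonic j A B v * g v).
Proof.
revert g; induction M as [|M IH]; intros g [C [D Hg]].
- eapply trig_deg_ext; [|apply (trig_deg_harmonic_mult j 0 A B C 0)].
  intro v; cbv beta; rewrite harmonic_0, (trig_top_0 _ _ _ Hg); reflexivity.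
- destruct (trig_top_split _ _ _ _ Hg) as [g' [Hg' Eg]].
  apply (trig_deg_ext _
    (fun v => harmonic j A B v * g' v + harmonic j A B v * harmonic (S M) C D v)).
  { intro v; rewrite Eg; ring. }
  apply trig_deg_plus; [|apply trig_deg_harmonic_mult].
  apply (trig_deg_le (j + M)); [apply IH, Hg' | lia].
Qed.

Lemma trig_deg_mult N M f g : trig_deg N f -> trig_deg M g ->
  trig_deg (N + M) (fun v => f v * g v).
Proof.
revert f; induction N as [|N IH]; intros f [A [B Hf]] Hg.
- eapply trig_deg_ext; [|apply (trig_deg_scal _ A _ Hg)].
  intro v; rewrite (trig_top_0 _ _ _ Hf); reflexivity.
- destruct (trig_top_split _ _ _ _ Hf) as [f' [Hf' Ef]].
  apply (trig_deg_ext _ (fun v => f' v * g v + harmonic (S N) A B v * g v)).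
  { intro v; rewrite Ef; ring. }
  apply trig_deg_plus; [|apply trig_deg_harmonic_mult_l, Hg].
  apply (trig_deg_le (N + M)); [apply IH; assumption | lia].
Qed.

Lemma trig_top_mult N M A B C D f g : (1 <= N)%nat -> (1 <= M)%nat ->
  trig_top N A B f -> trig_top M C D g ->
  trig_top (N + M) (top_re A B C D) (top_im A B C D) (fun v => f v * g v).
Proof.
intros HN HM Hf Hg.
destruct N as [|N]; [lia|]; destruct M as [|M]; [lia|].
destruct (trig_top_split _ _ _ _ Hf) as [f' [Hf' Ef]].
destruct (trig_top_split _ _ _ _ Hg) as [g' [Hg' Eg]].
assert (H1 : trig_top (S N + S M) 0 0 (fun v => f' v * g v)).
{ apply (trig_top_lift (N + S M)); [|lia]. apply trig_deg_mult; [|exists C, D]; assumption. }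
assert (H2 : trig_top (S N + S M) 0 0 (fun v => harmonic (S N) A B v * g' v)).
{ apply (trig_top_lift (S N + M)); [|lia]. apply trig_deg_harmonic_mult_l, Hg'. }
pose proof (trig_top_plus _ _ _ _ _ _ _ (trig_top_plus _ _ _ _ _ _ _ H1 H2)
  (trig_top_harmonic_mult (S N) (S M) A B C D ltac:(lia) ltac:(lia))) as H.
rewrite !Rplus_0_l in H; eapply trig_top_ext; [|exact H].
intro v; rewrite Ef, Eg; ring.
Qed.

(** * Trigonometric identities on an interval *)

Lemma locally_open_interval x0 x1 x : x0 < x < x1 -> locally x (fun t => x0 < t < x1).
Proof.
intro Hx; apply (open_and (fun t => x0 < t) (fun t => t < x1));
  [apply open_gt | apply open_lt | exact Hx].
Qed.

Lemma is_derive_vanishing_on_interval x0 x1 f x l :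
  (forall t, x0 < t < x1 -> f t = 0) -> x0 < x < x1 -> is_derive f x l -> l = 0.
Proof.
intros Hf Hx Hd.
assert (Hloc : locally x (fun t => 0 = f t)).
{ eapply filter_imp; [|exact (locally_open_interval x0 x1 x Hx)]. intros t Ht; symmetry; auto. }
assert (H0 : is_derive (fun _ => 0) x 0) by (auto_derive; auto).
rewrite <- (is_derive_unique _ _ _ Hd).
exact (is_derive_unique _ _ _ (is_derive_ext_loc _ _ _ _ Hloc H0)).
Qed.

Lemma is_derive_harmonic k A B (v : R) :
  is_derive (harmonic k A B) v (harmonic k (INR k * B) (- INR k * A) v).
Proof. unfold harmonic; auto_derive; auto; ring. Qed.

Lemma is_derive_trig_sum N a b (v : R) : is_derive (trig_sum N a b) v
  (trig_sum N (fun k => INR k * b k) (fun k => - INR k * a k) v).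
Proof.
induction N as [|N IH].
- apply is_derive_harmonic.
- eapply is_derive_ext; [intro t; symmetry; apply trig_sum_S|].
  rewrite trig_sum_S; apply (is_derive_plus (trig_sum N a b)); [exact IH|].
  apply is_derive_harmonic.
Qed.

Lemma trig_sum_derive_vanishing v0 v1 N a b :
  (forall v, v0 < v < v1 -> trig_sum N a b v = 0) ->
  forall v, v0 < v < v1 ->
  trig_sum N (fun k => INR k * b k) (fun k => - INR k * a k) v = 0.
Proof. intros H v Hv; eapply is_derive_vanishing_on_interval; eauto; apply is_derive_trig_sum. Qed.

Definition trig_coeffs_zero (N : nat) (a b : nat -> R) : Prop :=
  forall k, (k <= N)%nat -> a k = 0 /\ ((k <> 0)%nat -> b k = 0).

Lemma trig_sum_coeffs_zero N a b v : trig_coeffs_zero N a b -> trig_sum N a b v = 0.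
Proof.
intro H; apply sum_eq_R0; intros k Hk; destruct (H k Hk) as [Ha Hb].
unfold harmonic; rewrite Ha; destruct (Nat.eq_dec k 0) as [->|Hk0].
- simpl INR; rewrite (Rmult_0_l v), sin_0; ring.
- rewrite Hb by exact Hk0; ring.
Qed.

Lemma harmonic_pair_zero A B t :
  A * cos t + B * sin t = 0 -> B * cos t - A * sin t = 0 -> A = 0 /\ B = 0.
Proof.
intros H1 H2; pose proof (sin2_cos2 t) as Hsc; unfold Rsqr in Hsc.
assert (Hn : A ^ 2 + B ^ 2 = 0).
{ transitivity ((A * cos t + B * sin t) ^ 2 + (B * cos t - A * sin t) ^ 2).
  - transitivity ((A ^ 2 + B ^ 2) * (sin t * sin t + cos t * cos t)); [rewrite Hsc|]; ring.
  - rewrite H1, H2; ring. }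
split; nra.
Qed.

(* [f'' + (N+1)^2 f] kills the top harmonic of [f] and rescales the others. *)
Lemma trig_sum_vanishing_reduce v0 v1 N a b :
  (forall v, v0 < v < v1 -> trig_sum (S N) a b v = 0) ->
  forall v, v0 < v < v1 -> trig_sum N (fun k => (INR (S N) ^ 2 - INR k ^ 2) * a k)
    (fun k => (INR (S N) ^ 2 - INR k ^ 2) * b k) v = 0.
Proof.
intros H v Hv.
pose proof (trig_sum_derive_vanishing _ _ _ _ _ (trig_sum_derive_vanishing _ _ _ _ _ H) v Hv) as H2.
transitivity (INR (S N) ^ 2 * trig_sum (S N) a b v + trig_sum (S N)
  (fun k => INR k * (- INR k * a k)) (fun k => - INR k * (INR k * b k)) v).
- assert (Hlow : trig_sum N (fun k => (INR (S N) ^ 2 - INR k ^ 2) * a k)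
      (fun k => (INR (S N) ^ 2 - INR k ^ 2) * b k) v =
    INR (S N) ^ 2 * trig_sum N a b v + trig_sum N
      (fun k => INR k * (- INR k * a k)) (fun k => - INR k * (INR k * b k)) v).
  { unfold trig_sum; rewrite scal_sum, <- sum_plus; apply sum_eq; intros; unfold harmonic; ring. }
  rewrite Hlow, !trig_sum_S; unfold harmonic; ring.
- rewrite H, H2 by exact Hv; ring.
Qed.

Lemma trig_coeffs_zero_derive N a b : trig_coeffs_zero N a b ->
  trig_coeffs_zero N (fun k => INR k * b k) (fun k => - INR k * a k).
Proof.
intros H k Hk; destruct (H k Hk) as [Ha Hb]; rewrite Ha; split; [|intros; ring].
destruct (Nat.eq_dec k 0) as [->|Hk0]; [simpl; ring | rewrite Hb by exact Hk0; ring].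
Qed.

Lemma trig_sum_vanishing v0 v1 N a b : v0 < v1 ->
  (forall v, v0 < v < v1 -> trig_sum N a b v = 0) -> trig_coeffs_zero N a b.
Proof.
intro H01; revert a b; induction N as [|N IH]; intros a b H.
- intros k Hk; replace k with 0%nat by lia; split; [|lia].
  rewrite <- (harmonic_0 (a 0%nat) (b 0%nat) ((v0 + v1) / 2)); apply H; lra.
- assert (Hlow : trig_coeffs_zero N a b).
  { intros k Hk; destruct (IH _ _ (trig_sum_vanishing_reduce _ _ _ _ _ H) k Hk) as [Ha Hb].
    assert (Hne : INR (S N) ^ 2 - INR k ^ 2 <> 0).
    { assert (INR k < INR (S N)) by (apply lt_INR; lia). pose proof (pos_INR k); nra. }
    split.
    - destruct (Rmult_integral _ _ Ha); [contradiction | assumption].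
    - intro Hk0; destruct (Rmult_integral _ _ (Hb Hk0)); [contradiction | assumption]. }
  set (t := (v0 + v1) / 2); assert (Ht : v0 < t < v1) by (unfold t; lra).
  assert (E1 : harmonic (S N) (a (S N)) (b (S N)) t = 0).
  { rewrite <- (H t Ht), trig_sum_S, (trig_sum_coeffs_zero N a b t Hlow); ring. }
  assert (E2 : harmonic (S N) (INR (S N) * b (S N)) (- INR (S N) * a (S N)) t = 0).
  { rewrite <- (trig_sum_derive_vanishing _ _ _ _ _ H t Ht), trig_sum_S,
      (trig_sum_coeffs_zero _ _ _ t (trig_coeffs_zero_derive _ _ _ Hlow)); ring. }
  assert (HN : INR (S N) <> 0) by (apply not_0_INR; lia).
  destruct (harmonic_pair_zero (a (S N)) (b (S N)) (INR (S N) * t)) as [Ea Eb]; [exact E1| |].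
  { apply (Rmult_eq_reg_l (INR (S N))); [|exact HN].
    rewrite Rmult_0_r, <- E2; unfold harmonic; ring. }
  intros k Hk; destruct (Nat.eq_dec k (S N)) as [->|HkN]; [auto | apply Hlow; lia].
Qed.

Lemma trig_top_vanishing v0 v1 N A B f : v0 < v1 -> (1 <= N)%nat -> trig_top N A B f ->
  (forall v, v0 < v < v1 -> f v = 0) -> A = 0 /\ B = 0.
Proof.
intros H01 HN [a [b [<- [<- Hf]]]] H.
assert (Hs : forall v, v0 < v < v1 -> trig_sum N a b v = 0) by (intros v Hv; rewrite <- Hf; auto).
destruct (trig_sum_vanishing v0 v1 N a b H01 Hs N (le_n N)) as [Ha Hb].
split; [exact Ha | apply Hb; lia].
Qed.

Lemma trig_top_sq_vanishing v0 v1 N M A B f g : v0 < v1 -> (1 <= N)%nat -> (M < N + N)%nat ->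
  trig_top N A B f -> trig_deg M g ->
  (forall v, v0 < v < v1 -> f v * f v = g v) -> A = 0 /\ B = 0.
Proof.
intros H01 HN HM Hf Hg H.
pose proof (trig_top_plus _ _ _ _ _ _ _ (trig_top_mult N N _ _ _ _ _ _ HN HN Hf Hf)
  (trig_top_scal _ _ _ (-1) _ (trig_top_lift M (N + N) _ Hg HM))) as Hfg.
rewrite !Rmult_0_r, !Rplus_0_r in Hfg.
destruct (trig_top_vanishing v0 v1 (N + N) _ _ _ H01 ltac:(lia) Hfg) as [E1 E2].
{ intros v Hv; rewrite H by exact Hv; ring. }
destruct (top_mult_eq_0 _ _ _ _ E1 E2); assumption.
Qed.

Lemma trig2_vanishing v0 v1 c0 c1 s1 c2 s2 : v0 < v1 ->
  (forall v, v0 < v < v1 ->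
     c0 + c1 * cos v + s1 * sin v + c2 * cos (2 * v) + s2 * sin (2 * v) = 0) ->
  c0 = 0 /\ c1 = 0 /\ s1 = 0 /\ c2 = 0 /\ s2 = 0.
Proof.
intros H01 H.
assert (Hz : trig_coeffs_zero 2 (fun k => match k with 0 => c0 | 1 => c1 | _ => c2 end)
  (fun k => match k with 0 => 0 | 1 => s1 | _ => s2 end)).
{ apply (trig_sum_vanishing v0 v1); [exact H01|]; intros v Hv; rewrite <- (H v Hv).
  unfold trig_sum; simpl sum_f_R0; rewrite harmonic_0; unfold harmonic.
  change (INR 1) with 1; replace (INR 2) with 2 by (simpl; ring); rewrite Rmult_1_l; ring. }
destruct (Hz 0%nat) as [E0 _]; [lia|].
destruct (Hz 1%nat) as [E1 F1]; [lia|].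
destruct (Hz 2%nat) as [E2 F2]; [lia|].
repeat split; auto.
Qed.

Lemma trig1_vanishing v0 v1 c0 c1 s1 : v0 < v1 ->
  (forall v, v0 < v < v1 -> c0 + c1 * cos v + s1 * sin v = 0) ->
  c0 = 0 /\ c1 = 0 /\ s1 = 0.
Proof.
intros H01 H; destruct (trig2_vanishing v0 v1 c0 c1 s1 0 0 H01) as [E0 [E1 [E2 _]]]; auto.
intros v Hv; transitivity (c0 + c1 * cos v + s1 * sin v); [ring | auto].
Qed.

Lemma quadratic_in_harmonic_vanishing v0 v1 p q c0 c1 c2 : v0 < v1 -> p ^ 2 + q ^ 2 <> 0 ->
  (forall v, v0 < v < v1 ->
     c0 + c1 * (p * cos v + q * sin v) + c2 * (p * cos v + q * sin v) ^ 2 = 0) ->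
  c0 = 0 /\ c1 = 0 /\ c2 = 0.
Proof.
intros H01 Hpq H.
destruct (trig2_vanishing v0 v1 (c0 + c2 * (p ^ 2 + q ^ 2) / 2) (c1 * p) (c1 * q)
  (c2 * (p ^ 2 - q ^ 2) / 2) (c2 * p * q) H01) as [E0 [E1 [E2 [E3 E4]]]].
- intros v Hv; rewrite <- (H v Hv), cos_2a, sin_2a.
  pose proof (sin2_cos2 v) as Hsc; unfold Rsqr in Hsc.
  replace (c2 * (p ^ 2 + q ^ 2) / 2)
    with (c2 * (p ^ 2 + q ^ 2) / 2 * (sin v * sin v + cos v * cos v))
    by (rewrite Hsc; ring).
  field.
- assert (Hc2 : c2 = 0).
  { apply (Rmult_pair_eq_0 c2 (p ^ 2 - q ^ 2) (2 * p * q)); [|lra|lra].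
    replace ((p ^ 2 - q ^ 2) ^ 2 + (2 * p * q) ^ 2) with ((p ^ 2 + q ^ 2) ^ 2) by ring.
    apply pow_nonzero, Hpq. }
  assert (Hc1 : c1 = 0) by exact (Rmult_pair_eq_0 c1 p q Hpq E1 E2).
  subst c1 c2; repeat split; lra.
Qed.

(** * The linear Weingarten identity *)

(* With [n = 0] and [a2 = b2 = 0], [lw_residual] below is [c0 + c1 P + c2 P^2]
   in [P = a1 cos v + b1 sin v]; the three equations are [c2 = 0], [c1 = 0],
   [c0 = 0] with [c = (1 + m)^2 r0] and [s = a1^2 + b1^2]. *)
Lemma lw_low_degree_absurd m c r0 r1 r2 s : m <> 0 -> c <> 0 -> 0 <= s ->
  let d0 := 1 + s + r1 ^ 2 - r0 * r2 in
  4 * m * r1 ^ 2 + c * r2 = 0 ->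
  4 * m * r1 * d0 + 2 * (c * r2) * r1 = 0 ->
  m * d0 ^ 2 + c * r2 * (1 + r1 ^ 2) = 0 -> False.
Proof.
intros Hm Hc Hs d0 E2 E1 E0.
assert (Hk : c * r2 = - 4 * m * r1 ^ 2) by lra.
rewrite Hk in E1, E0.
assert (Hd0 : d0 ^ 2 = 4 * r1 ^ 2 * (1 + r1 ^ 2)).
{ apply (Rmult_eq_reg_l m); [|exact Hm]. lra. }
assert (Hr1 : r1 = 0).
{ assert (E : 4 * m * r1 * (d0 - 2 * r1 ^ 2) = 0) by lra.
  destruct (Rmult_integral _ _ E) as [E'|E']; [|assert (d0 = 2 * r1 ^ 2) by lra; nra].
  destruct (Rmult_integral _ _ E') as [E''|E'']; [|exact E''].
  destruct (Rmult_integral _ _ E''); lra. }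
subst r1.
assert (Hr2 : r2 = 0).
{ destruct (Rmult_integral c r2) as [E|E]; [lra | contradiction | exact E]. }
subst r2; unfold d0 in Hd0; nra.
Qed.

Section LinearWeingartenResidual.

(* The 2-jet of [riemann_cyclic a b r] at a parameter [u]: [r0 = r u],
   [a1 = a' u], [a2 = a'' u], etc.  With [w = sqrt metric_det] one has
   [EG - F^2 = r0^2 metric_det], [H = mean_num / (2 r0 w metric_det)] and
   [K = - gauss_num / (r0 metric_det^2)]; [lw_residual m n] is
   [(1 + m)^2 (H^2 - K) - (n - (1 - m) H)^2] multiplied by [r0^2 metric_det^3]. *)
Variables r0 a1 b1 r1 a2 b2 r2 : R.

Definition radial_slope (v : R) : R := r1 + a1 * cos v + b1 * sin v.
Definition metric_det (v : R) : R := 1 + radial_slope v ^ 2.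
Definition gauss_num (v : R) : R := r2 + a2 * cos v + b2 * sin v.
Definition mean_num (v : R) : R :=
  (1 + a1 ^ 2 + b1 ^ 2 + r1 ^ 2 - r0 * r2) + (2 * r1 * a1 - r0 * a2) * cos v
  + (2 * r1 * b1 - r0 * b2) * sin v.
Definition lw_residual (m n v : R) : R :=
  m * mean_num v ^ 2 + (1 + m) ^ 2 * r0 * gauss_num v * metric_det v
  + n * (1 - m) * r0 * mean_num v * metric_det v * sqrt (metric_det v)
  - n ^ 2 * r0 ^ 2 * metric_det v ^ 3.

Lemma metric_det_pos v : 0 < metric_det v.
Proof. unfold metric_det; pose proof (pow2_ge_0 (radial_slope v)); lra. Qed.

Lemma sqrt_metric_det_sq v : sqrt (metric_det v) ^ 2 = metric_det v.
Proof. rewrite <- Rsqr_pow2; apply Rsqr_sqrt, Rlt_le, metric_det_pos. Qed.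

Lemma trig_top_metric_det :
  trig_top 2 (top_re a1 b1 a1 b1) (top_im a1 b1 a1 b1) metric_det.
Proof.
pose proof (trig_top_mult 1 1 _ _ _ _ _ _ (le_n 1) (le_n 1)
  (trig_top_1 r1 a1 b1) (trig_top_1 r1 a1 b1)) as H.
assert (H1 : trig_top 2 0 0 (fun _ => 1)).
{ apply (trig_top_lift 1); [|lia]. exists 0, 0.
  eapply trig_top_ext; [|apply (trig_top_1 1 0 0)]. intro v; cbv beta; ring. }
pose proof (trig_top_plus _ _ _ _ _ _ _ H1 H) as H'; rewrite !Rplus_0_l in H'.
eapply trig_top_ext; [|exact H']. intro v; unfold metric_det, radial_slope; ring.
Qed.

Definition lw_rational_part (m n v : R) : R :=
  m * (mean_num v * mean_num v) + (1 + m) ^ 2 * r0 * (gauss_num v * metric_det v)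
  + - (n ^ 2 * r0 ^ 2) * (metric_det v * metric_det v * metric_det v).

Lemma lw_residual_split m n v : lw_residual m n v =
  lw_rational_part m n v + n * (1 - m) * r0 * mean_num v * metric_det v * sqrt (metric_det v).
Proof. unfold lw_residual, lw_rational_part; ring. Qed.

Lemma trig_deg_mean_num_sq : trig_deg 2 (fun v => mean_num v * mean_num v).
Proof. apply (trig_deg_mult 1 1); eexists; eexists; apply trig_top_1. Qed.

Lemma trig_top_lw_rational_part m n A B :
  trig_top 6 A B (fun v => metric_det v * metric_det v * metric_det v) ->
  trig_top 6 (- (n ^ 2 * r0 ^ 2) * A) (- (n ^ 2 * r0 ^ 2) * B) (lw_rational_part m n).
Proof.
intro HT3.
assert (HLT : trig_deg 3 (fun v => gauss_num v * metric_det v))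
  by (apply (trig_deg_mult 1 2); eexists; eexists; [apply trig_top_1 | apply trig_top_metric_det]).
pose proof (trig_top_plus _ _ _ _ _ _ _ (trig_top_plus _ _ _ _ _ _ _
  (trig_top_scal _ _ _ m _ (trig_top_lift 2 6 _ trig_deg_mean_num_sq ltac:(lia)))
  (trig_top_scal _ _ _ ((1 + m) ^ 2 * r0) _ (trig_top_lift 3 6 _ HLT ltac:(lia))))
  (trig_top_scal _ _ _ (- (n ^ 2 * r0 ^ 2)) _ HT3)) as H.
rewrite !Rmult_0_r, !Rplus_0_l in H; exact H.
Qed.

Lemma lw_residual_minimal v : lw_residual (-1) 0 v = - mean_num v ^ 2.
Proof. unfold lw_residual; ring. Qed.

Lemma mean_num_vanishing v0 v1 : v0 < v1 ->
  (forall v, v0 < v < v1 -> mean_num v = 0) ->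
  1 + a1 ^ 2 + b1 ^ 2 + r1 ^ 2 - r0 * r2 = 0 /\
  2 * r1 * a1 - r0 * a2 = 0 /\ 2 * r1 * b1 - r0 * b2 = 0.
Proof. intros H01 H; apply (trig1_vanishing v0 v1); [exact H01 | exact H]. Qed.

Hypothesis Hab1 : a1 ^ 2 + b1 ^ 2 <> 0.

Lemma trig_top_metric_det_cube : exists A B, A ^ 2 + B ^ 2 <> 0 /\
  trig_top 6 A B (fun v => metric_det v * metric_det v * metric_det v).
Proof.
pose proof trig_top_metric_det as HT.
eexists; eexists; split;
  [|exact (trig_top_mult 4 2 _ _ _ _ _ _ ltac:(lia) ltac:(lia)
         (trig_top_mult 2 2 _ _ _ _ _ _ ltac:(lia) ltac:(lia) HT HT) HT)].
repeat apply top_norm_neq_0; exact Hab1.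
Qed.

Variables m n v0 v1 : R.
Hypothesis H01 : v0 < v1.
Hypothesis Hr0 : 0 < r0.
Hypothesis Hres : forall v, v0 < v < v1 -> lw_residual m n v = 0.

(* Squaring away [sqrt metric_det] leaves a degree-12 trigonometric identity
   whose top harmonic is a nonzero multiple of [n^4]. *)
Lemma lw_residual_n_eq_0 : n = 0.
Proof.
destruct trig_top_metric_det_cube as [A [B [HAB HT3]]].
pose proof (trig_deg_mult 2 6 _ _ trig_deg_mean_num_sq (ex_intro _ A (ex_intro _ B HT3))) as HR.
destruct (trig_top_sq_vanishing v0 v1 6 8 _ _ _
  (fun v => (n * (1 - m) * r0) ^ 2 * ((mean_num v * mean_num v) *
     (metric_det v * metric_det v * metric_det v))) H01 ltac:(lia) ltac:(lia)
  (trig_top_lw_rational_part m n A B HT3) (trig_deg_scal _ _ _ HR)) as [EA EB].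
- intros v Hv.
  assert (E : lw_rational_part m n v =
      - (n * (1 - m) * r0 * mean_num v * metric_det v * sqrt (metric_det v))).
  { pose proof (Hres v Hv) as E; rewrite lw_residual_split in E; lra. }
  pose proof (sqrt_metric_det_sq v) as Ew; rewrite E.
  set (w := sqrt (metric_det v)) in *; set (T := metric_det v) in *.
  rewrite <- Ew; ring.
- assert (Hn : - (n ^ 2 * r0 ^ 2) = 0) by exact (Rmult_pair_eq_0 _ A B HAB EA EB).
  assert (Hn2 : (n * r0) ^ 2 = 0) by lra.
  destruct (Rmult_integral _ _ (pow_eq_0 _ _ Hn2)); [assumption | lra].
Qed.

Lemma lw_gauss_num_const : m <> -1 -> a2 = 0 /\ b2 = 0.
Proof.
intro Hm1; pose proof lw_residual_n_eq_0 as Hn.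
assert (Hc : (1 + m) ^ 2 * r0 <> 0)
  by (apply Rmult_integral_contrapositive_currified; [apply pow_nonzero|]; lra).
pose proof (trig_top_plus _ _ _ _ _ _ _
  (trig_top_scal _ _ _ m _ (trig_top_lift 2 3 _ trig_deg_mean_num_sq ltac:(lia)))
  (trig_top_scal _ _ _ ((1 + m) ^ 2 * r0) _ (trig_top_mult 1 2 _ _ _ _ _ _ ltac:(lia) ltac:(lia)
     (trig_top_1 r2 a2 b2) trig_top_metric_det))) as H.
rewrite !Rmult_0_r, !Rplus_0_l in H.
destruct (trig_top_vanishing v0 v1 3 _ _ _ H01 ltac:(lia) H) as [E1 E2].
{ intros v Hv; rewrite <- (Hres v Hv); unfold lw_residual, gauss_num; rewrite Hn; ring. }
destruct (Rmult_integral _ _ E1) as [E1'|E1']; [contradiction|].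
destruct (Rmult_integral _ _ E2) as [E2'|E2']; [contradiction|].
destruct (top_mult_eq_0 _ _ _ _ E1' E2') as [Hab2|[Ht1 Ht2]]; [exact Hab2|].
exfalso; apply (top_norm_neq_0 a1 b1 a1 b1 Hab1 Hab1); rewrite Ht1, Ht2; ring.
Qed.

Lemma lw_residual_m_eq_m1 : m <> 0 -> m = -1.
Proof.
intro Hm; destruct (Req_dec m (-1)) as [Hm1|Hm1]; [exact Hm1|exfalso].
pose proof lw_residual_n_eq_0 as Hn.
destruct (lw_gauss_num_const Hm1) as [Ha2 Hb2].
set (d0 := 1 + (a1 ^ 2 + b1 ^ 2) + r1 ^ 2 - r0 * r2).
destruct (quadratic_in_harmonic_vanishing v0 v1 a1 b1
  (m * d0 ^ 2 + (1 + m) ^ 2 * r0 * r2 * (1 + r1 ^ 2))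
  (4 * m * r1 * d0 + 2 * ((1 + m) ^ 2 * r0 * r2) * r1)
  (4 * m * r1 ^ 2 + (1 + m) ^ 2 * r0 * r2) H01 Hab1) as [E0 [E1 E2]].
{ intros v Hv; rewrite <- (Hres v Hv).
  unfold lw_residual, mean_num, gauss_num, metric_det, radial_slope, d0.
  rewrite Hn, Ha2, Hb2; ring. }
apply (lw_low_degree_absurd m ((1 + m) ^ 2 * r0) r0 r1 r2 (a1 ^ 2 + b1 ^ 2) Hm); auto.
- apply Rmult_integral_contrapositive_currified; [apply pow_nonzero|]; lra.
- pose proof (pow2_ge_0 a1); pose proof (pow2_ge_0 b1); lra.
Qed.

End LinearWeingartenResidual.

(** * Riemann-type cyclic surfaces *)

Lemma smooth_on_ex_derive f u0 u1 x : smooth_on f u0 u1 -> u0 < x < u1 -> ex_derive f x.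
Proof. intros H Hx; exact (H 1%nat x Hx). Qed.

Lemma smooth_on_ex_derive2 f u0 u1 x : smooth_on f u0 u1 -> u0 < x < u1 -> ex_derive (Derive f) x.
Proof. intros H Hx; exact (H 2%nat x Hx). Qed.

Lemma Derive_plus_scal (f g : R -> R) (k x : R) : ex_derive f x -> ex_derive g x ->
  Derive (fun t => f t + g t * k) x = Derive f x + Derive g x * k.
Proof.
intros Hf Hg; apply is_derive_unique; auto_derive; auto.
rewrite !Rmult_1_l; reflexivity.
Qed.

Lemma sin2_cos2_eq x y k v : x - y = k * (sin v * sin v + cos v * cos v - 1) -> x = y.
Proof. intro H; pose proof (sin2_cos2 v) as E; unfold Rsqr in E; rewrite E in H; lra. Qed.

Lemma principal_curvatures_linear H K m n : sqrt (H ^ 2 - K) <> 0 ->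
  H + sqrt (H ^ 2 - K) = m * (H - sqrt (H ^ 2 - K)) + n \/
  H - sqrt (H ^ 2 - K) = m * (H + sqrt (H ^ 2 - K)) + n ->
  (1 + m) ^ 2 * (H ^ 2 - K) = (n - (1 - m) * H) ^ 2.
Proof.
set (S := sqrt (H ^ 2 - K)); intros HS Hl.
assert (HS2 : S * S = H ^ 2 - K).
{ apply sqrt_sqrt; destruct (Rle_or_lt 0 (H ^ 2 - K)) as [h|h]; [exact h|].
  exfalso; apply HS, sqrt_neg_0; lra. }
rewrite <- HS2; destruct Hl as [E|E].
- replace (n - (1 - m) * H) with ((1 + m) * S) by lra; ring.
- replace (n - (1 - m) * H) with (- (1 + m) * S) by lra; ring.
Qed.

Section RiemannCyclic.

Variables (a b r : R -> R) (u0 u1 u : R).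
Hypothesis Ha : smooth_on a u0 u1.
Hypothesis Hb : smooth_on b u0 u1.
Hypothesis Hr : smooth_on r u0 u1.
Hypothesis Hu : u0 < u < u1.

Let X := riemann_cyclic a b r.

Lemma Xu_riemann_cyclic v :
  Xu X u v = (Derive a u + Derive r u * cos v, Derive b u + Derive r u * sin v, 1).
Proof.
unfold Xu, X, riemann_cyclic, v1, v2, v3; simpl.
rewrite !Derive_plus_scal by (apply (smooth_on_ex_derive _ u0 u1); assumption).
rewrite Derive_id; reflexivity.
Qed.

Lemma Xv_riemann_cyclic v : Xv X u v = (- r u * sin v, r u * cos v, 0).
Proof.
unfold Xv, X, riemann_cyclic, v1, v2, v3; simpl.
f_equal; [f_equal|]; apply is_derive_unique; auto_derive; auto; ring.
Qed.

Lemma Xuu_riemann_cyclic v : Xu (Xu X) u v =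
  (Derive_n a 2 u + Derive_n r 2 u * cos v, Derive_n b 2 u + Derive_n r 2 u * sin v, 0).
Proof.
assert (E : forall f g k, smooth_on f u0 u1 -> smooth_on g u0 u1 ->
  Derive (fun t => Derive (fun s => f s + g s * k) t) u = Derive_n f 2 u + Derive_n g 2 u * k).
{ intros f g k Hf Hg.
  rewrite (Derive_ext_loc _ (fun t => Derive f t + Derive g t * k)).
  - apply Derive_plus_scal; apply (smooth_on_ex_derive2 _ u0 u1); assumption.
  - eapply filter_imp; [|exact (locally_open_interval u0 u1 u Hu)].
    intros t Ht; apply Derive_plus_scal; apply (smooth_on_ex_derive _ u0 u1); assumption. }
unfold Xu, X, riemann_cyclic, v1, v2, v3; simpl.
rewrite !E by assumption.
rewrite (Derive_ext _ (fun _ => 1)) by (intro; apply Derive_id).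
rewrite Derive_const; reflexivity.
Qed.

Lemma Xuv_riemann_cyclic v : Xv (Xu X) u v = (- Derive r u * sin v, Derive r u * cos v, 0).
Proof.
unfold Xv at 1.
rewrite (Derive_ext (fun t => v1 (Xu X u t)) (fun t => Derive a u + Derive r u * cos t)),
  (Derive_ext (fun t => v2 (Xu X u t)) (fun t => Derive b u + Derive r u * sin t)),
  (Derive_ext (fun t => v3 (Xu X u t)) (fun _ => 1)), Derive_const
  by (intro t; rewrite Xu_riemann_cyclic; reflexivity).
f_equal; f_equal; apply is_derive_unique; auto_derive; auto; ring.
Qed.

Lemma Xvv_riemann_cyclic v : Xv (Xv X) u v = (- r u * cos v, - r u * sin v, 0).
Proof.
unfold Xv at 1.
rewrite (Derive_ext (fun t => v1 (Xv X u t)) (fun t => - r u * sin t)),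
  (Derive_ext (fun t => v2 (Xv X u t)) (fun t => r u * cos t)),
  (Derive_ext (fun t => v3 (Xv X u t)) (fun _ => 0)), Derive_const
  by (intro t; rewrite Xv_riemann_cyclic; reflexivity).
f_equal; f_equal; apply is_derive_unique; auto_derive; auto; ring.
Qed.

Hypothesis Hr0 : 0 < r u.

Let r0 := r u.
Let a1 := Derive a u.
Let b1 := Derive b u.
Let r1 := Derive r u.
Let a2 := Derive_n a 2 u.
Let b2 := Derive_n b 2 u.
Let r2 := Derive_n r 2 u.

Lemma fE_riemann_cyclic v :
  fE X u v = 1 + a1 ^ 2 + b1 ^ 2 + r1 ^ 2 + 2 * r1 * (a1 * cos v + b1 * sin v).
Proof.
unfold fE; rewrite Xu_riemann_cyclic; unfold dot, v1, v2, v3; simpl.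
apply (sin2_cos2_eq _ _ (r1 ^ 2) v); fold a1 b1 r1; ring.
Qed.

Lemma fF_riemann_cyclic v : fF X u v = r0 * (b1 * cos v - a1 * sin v).
Proof.
unfold fF; rewrite Xu_riemann_cyclic, Xv_riemann_cyclic; unfold dot, v1, v2, v3; simpl.
fold r0 a1 b1; ring.
Qed.

Lemma fG_riemann_cyclic v : fG X u v = r0 ^ 2.
Proof.
unfold fG; rewrite Xv_riemann_cyclic; unfold dot, v1, v2, v3; simpl.
apply (sin2_cos2_eq _ _ (r0 ^ 2) v); fold r0; ring.
Qed.

Lemma fW2_riemann_cyclic v : fW2 X u v = r0 ^ 2 * metric_det a1 b1 r1 v.
Proof.
unfold fW2; rewrite fE_riemann_cyclic, fF_riemann_cyclic, fG_riemann_cyclic.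
unfold metric_det, radial_slope; apply (sin2_cos2_eq _ _ (- (a1 ^ 2 + b1 ^ 2) * r0 ^ 2) v); ring.
Qed.

Lemma normal_length_riemann_cyclic v :
  sqrt (dot (cross (Xu X u v) (Xv X u v)) (cross (Xu X u v) (Xv X u v)))
  = r0 * sqrt (metric_det a1 b1 r1 v).
Proof.
rewrite <- (sqrt_pow2 (r0 * sqrt (metric_det a1 b1 r1 v)))
  by (apply Rmult_le_pos; [unfold r0; lra | apply sqrt_pos]).
f_equal; rewrite Rpow_mult_distr, sqrt_metric_det_sq.
rewrite Xu_riemann_cyclic, Xv_riemann_cyclic; unfold dot, cross, v1, v2, v3; cbn [fst snd].
unfold metric_det, radial_slope; fold a1 b1 r1 r0.
apply (sin2_cos2_eq _ _ (r0 ^ 2 * (1 + 2 * (a1 * cos v + b1 * sin v) * r1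
  + r1 ^ 2 * (sin v * sin v + cos v * cos v + 1))) v); ring.
Qed.

Lemma unit_normal_riemann_cyclic v : unit_normal X u v =
  (- cos v / sqrt (metric_det a1 b1 r1 v), - sin v / sqrt (metric_det a1 b1 r1 v),
   radial_slope a1 b1 r1 v / sqrt (metric_det a1 b1 r1 v)).
Proof.
unfold unit_normal; cbv zeta; rewrite normal_length_riemann_cyclic.
pose proof (sqrt_lt_R0 _ (metric_det_pos a1 b1 r1 v)).
rewrite Xu_riemann_cyclic, Xv_riemann_cyclic; unfold cross, radial_slope, v1, v2, v3; cbn [fst snd].
fold r0 a1 b1 r1; f_equal; [f_equal; field; unfold r0; lra|].
apply (sin2_cos2_eq _ _ (r1 / sqrt (metric_det a1 b1 r1 v)) v); field; unfold r0; lra.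
Qed.

Lemma se_riemann_cyclic v : se X u v = - gauss_num a2 b2 r2 v / sqrt (metric_det a1 b1 r1 v).
Proof.
pose proof (sqrt_lt_R0 _ (metric_det_pos a1 b1 r1 v)).
unfold se; rewrite Xuu_riemann_cyclic, unit_normal_riemann_cyclic.
unfold dot, gauss_num, v1, v2, v3; cbn [fst snd].
fold a2 b2 r2; apply (sin2_cos2_eq _ _ (- r2 / sqrt (metric_det a1 b1 r1 v)) v); field; lra.
Qed.

Lemma sf_riemann_cyclic v : sf X u v = 0.
Proof.
pose proof (sqrt_lt_R0 _ (metric_det_pos a1 b1 r1 v)).
unfold sf; rewrite Xuv_riemann_cyclic, unit_normal_riemann_cyclic.
unfold dot, v1, v2, v3; cbn [fst snd].
field; lra.
Qed.

Lemma sg_riemann_cyclic v : sg X u v = r0 / sqrt (metric_det a1 b1 r1 v).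
Proof.
pose proof (sqrt_lt_R0 _ (metric_det_pos a1 b1 r1 v)).
unfold sg; rewrite Xvv_riemann_cyclic, unit_normal_riemann_cyclic.
unfold dot, v1, v2, v3; cbn [fst snd].
fold r0; apply (sin2_cos2_eq _ _ (r0 / sqrt (metric_det a1 b1 r1 v)) v); field; lra.
Qed.

Lemma meanH_riemann_cyclic v : meanH X u v = mean_num r0 a1 b1 r1 a2 b2 r2 v
  / (2 * r0 * sqrt (metric_det a1 b1 r1 v) * metric_det a1 b1 r1 v).
Proof.
pose proof (sqrt_lt_R0 _ (metric_det_pos a1 b1 r1 v)); pose proof (metric_det_pos a1 b1 r1 v).
unfold meanH; rewrite se_riemann_cyclic, sf_riemann_cyclic, sg_riemann_cyclic, fE_riemann_cyclic,
  fF_riemann_cyclic, fG_riemann_cyclic, fW2_riemann_cyclic.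
unfold mean_num, gauss_num; field; unfold r0; lra.
Qed.

Lemma gaussK_riemann_cyclic v :
  gaussK X u v = - gauss_num a2 b2 r2 v / (r0 * metric_det a1 b1 r1 v ^ 2).
Proof.
pose proof (sqrt_lt_R0 _ (metric_det_pos a1 b1 r1 v)); pose proof (metric_det_pos a1 b1 r1 v).
unfold gaussK; rewrite se_riemann_cyclic, sf_riemann_cyclic, sg_riemann_cyclic, fW2_riemann_cyclic.
pose proof (sqrt_metric_det_sq a1 b1 r1 v) as Ew.
set (w := sqrt (metric_det a1 b1 r1 v)) in *; set (T := metric_det a1 b1 r1 v) in *.
rewrite <- Ew; field; unfold r0; lra.
Qed.

Lemma lw_residual_riemann_cyclic m n v :
  kappa_plus X u v <> kappa_minus X u v ->
  kappa_plus X u v = m * kappa_minus X u v + n \/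
  kappa_minus X u v = m * kappa_plus X u v + n ->
  lw_residual r0 a1 b1 r1 a2 b2 r2 m n v = 0.
Proof.
unfold kappa_plus, kappa_minus; intros Hk Hl.
assert (HS : sqrt (meanH X u v ^ 2 - gaussK X u v) <> 0) by (intro E; apply Hk; rewrite E; ring).
pose proof (principal_curvatures_linear _ _ m n HS Hl) as Rel.
rewrite meanH_riemann_cyclic, gaussK_riemann_cyclic in Rel.
pose proof (sqrt_lt_R0 _ (metric_det_pos a1 b1 r1 v)).
pose proof (sqrt_metric_det_sq a1 b1 r1 v) as Ew.
unfold lw_residual.
set (w := sqrt (metric_det a1 b1 r1 v)) in *; set (T := metric_det a1 b1 r1 v) in *.
set (D := mean_num r0 a1 b1 r1 a2 b2 r2 v) in *; set (L := gauss_num a2 b2 r2 v) in *.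
rewrite <- Ew in *.
transitivity (r0 ^ 2 * (w ^ 2) ^ 3 * ((1 + m) ^ 2 * ((D / (2 * r0 * w * w ^ 2)) ^ 2
  - - L / (r0 * (w ^ 2) ^ 2)) - (n - (1 - m) * (D / (2 * r0 * w * w ^ 2))) ^ 2)).
- field; unfold r0; lra.
- rewrite Rel; ring.
Qed.

End RiemannCyclic.

Lemma constant_on_interval f x0 x1 : (forall x, x0 < x < x1 -> is_derive f x 0) ->
  forall x y, x0 < x < x1 -> x0 < y < x1 -> f x = f y.
Proof.
intros Hf x y Hx Hy.
assert (Hin : forall z, Rmin x y <= z <= Rmax x y -> x0 < z < x1).
{ intros z [Hz1 Hz2]; split.
  - eapply Rlt_le_trans; [|exact Hz1]; apply Rmin_glb_lt; lra.
  - eapply Rle_lt_trans; [exact Hz2|]; apply Rmax_lub_lt; lra. }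
destruct (MVT_gen f x y (fun _ => 0)) as [c [_ E]].
- intros z Hz; apply Hf, Hin; lra.
- intros z Hz; apply continuity_pt_filterlim, (ex_derive_continuous f z).
  exists 0; apply Hf, Hin, Hz.
- lra.
Qed.

Lemma revolution_of_Derive_0 a b u0 u1 : u0 < u1 ->
  smooth_on a u0 u1 -> smooth_on b u0 u1 ->
  (forall u, u0 < u < u1 -> Derive a u = 0 /\ Derive b u = 0) ->
  exists ca cb, forall u, u0 < u < u1 -> a u = ca /\ b u = cb.
Proof.
intros H01 Ha Hb H0.
assert (Hmid : u0 < (u0 + u1) / 2 < u1) by lra.
exists (a ((u0 + u1) / 2)), (b ((u0 + u1) / 2)); intros u Hu; split;
  apply (constant_on_interval _ u0 u1); auto; intros x Hx.
- rewrite <- (proj1 (H0 x Hx)); apply Derive_correct, (smooth_on_ex_derive _ u0 u1); auto.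
- rewrite <- (proj2 (H0 x Hx)); apply Derive_correct, (smooth_on_ex_derive _ u0 u1); auto.
Qed.

(* [(f' / r^2)' = (r f'' - 2 r' f') / r^3]. *)
Lemma Derive_proportional_sq f r u0 u1 : u0 < u1 ->
  smooth_on f u0 u1 -> smooth_on r u0 u1 -> (forall x, u0 < x < u1 -> 0 < r x) ->
  (forall x, u0 < x < u1 -> 2 * Derive r x * Derive f x - r x * Derive_n f 2 x = 0) ->
  exists c, forall x, u0 < x < u1 -> Derive f x = c * r x ^ 2.
Proof.
intros H01 Hf Hr Hrpos Hode.
assert (Hc : forall x, u0 < x < u1 -> is_derive (fun t => Derive f t / r t ^ 2) x 0).
{ intros x Hx; pose proof (Hrpos x Hx); pose proof (Hode x Hx) as E.
  auto_derive.
  - repeat split; [apply (smooth_on_ex_derive2 _ u0 u1) | apply (smooth_on_ex_derive _ u0 u1) | ];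
      auto; intro Hz; nra.
  - change (Derive (fun t => Derive f t) x) with (Derive_n f 2 x).
    change (Derive (fun t => r t) x) with (Derive r x).
    replace (Derive_n f 2 x) with (2 * Derive r x * Derive f x / r x) by (field_simplify_eq; lra).
    field; lra. }
assert (Hmid : u0 < (u0 + u1) / 2 < u1) by lra.
exists (Derive f ((u0 + u1) / 2) / r ((u0 + u1) / 2) ^ 2); intros x Hx.
rewrite <- (constant_on_interval _ u0 u1 Hc x _ Hx Hmid).
pose proof (Hrpos x Hx); field; lra.
Qed.

Lemma riemann_alternative_of_ode a b r u0 u1 : u0 < u1 ->
  smooth_on a u0 u1 -> smooth_on b u0 u1 -> smooth_on r u0 u1 ->
  (forall u, u0 < u < u1 -> 0 < r u) ->
  (forall u, u0 < u < u1 ->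
     1 + Derive a u ^ 2 + Derive b u ^ 2 + Derive r u ^ 2 - r u * Derive_n r 2 u = 0 /\
     2 * Derive r u * Derive a u - r u * Derive_n a 2 u = 0 /\
     2 * Derive r u * Derive b u - r u * Derive_n b 2 u = 0) ->
  (exists ca cb : R, forall u, u0 < u < u1 -> a u = ca /\ b u = cb) \/
  (exists lam mu : R, lam ^ 2 + mu ^ 2 <> 0 /\
     forall u, u0 < u < u1 ->
       Derive a u = lam * r u ^ 2 /\ Derive b u = mu * r u ^ 2 /\
       1 + (lam ^ 2 + mu ^ 2) * r u ^ 4 + Derive r u ^ 2 - r u * Derive_n r 2 u = 0).
Proof.
intros H01 Ha Hb Hr Hrpos Hode.
destruct (Derive_proportional_sq a r u0 u1) as [lam Hlam]; auto; [apply Hode|].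
destruct (Derive_proportional_sq b r u0 u1) as [mu Hmu]; auto; [apply Hode|].
destruct (Req_dec (lam ^ 2 + mu ^ 2) 0) as [H0|H0].
- assert (lam = 0) by nra; assert (mu = 0) by nra; subst lam mu.
  left; apply revolution_of_Derive_0; auto; intros u Hu.
  rewrite Hlam, Hmu by exact Hu; split; ring.
- right; exists lam, mu; split; [exact H0|]; intros u Hu.
  rewrite <- (proj1 (Hode u Hu)), Hlam, Hmu by exact Hu; repeat split; ring.
Qed.

Theorem theorem2 (a b r : R -> R) (u0 u1 v0 v1 : R) :
  u0 < u1 -> v0 < v1 ->
  smooth_on a u0 u1 -> smooth_on b u0 u1 -> smooth_on r u0 u1 ->
  (forall u, u0 < u < u1 -> 0 < r u) ->
  let D := fun u v => u0 < u < u1 /\ v0 < v < v1 in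
  umbilic_free (riemann_cyclic a b r) D ->
  is_LW (riemann_cyclic a b r) D ->
  (* (1) surface of revolution: a, b constant *)
  (exists ca cb : R, forall u, u0 < u < u1 -> a u = ca /\ b u = cb)
  \/
  (* (2) classical Riemann example *)
  (exists lam mu : R, lam ^ 2 + mu ^ 2 <> 0 /\
     forall u, u0 < u < u1 ->
       Derive a u = lam * r u ^ 2 /\ Derive b u = mu * r u ^ 2 /\
       1 + (lam ^ 2 + mu ^ 2) * r u ^ 4 + Derive r u ^ 2
         - r u * Derive_n r 2 u = 0).
Proof.
intros H01 Hv01 Ha Hb Hr Hrpos D Humb [m [n [Hm0 Hlw]]].
assert (Hres : forall u v, u0 < u < u1 -> v0 < v < v1 ->
  lw_residual (r u) (Derive a u) (Derive b u) (Derive r u)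
    (Derive_n a 2 u) (Derive_n b 2 u) (Derive_n r 2 u) m n v = 0).
{ intros u v Hu Hv; apply (lw_residual_riemann_cyclic a b r u0 u1); auto.
  - apply Humb; split; assumption.
  - destruct Hlw as [Hl|Hl]; [left|right]; apply Hl; split; assumption. }
destruct (classic (exists u, u0 < u < u1 /\ Derive a u ^ 2 + Derive b u ^ 2 <> 0))
  as [[u [Hu Hab]]|Hrev].
- pose proof (fun v => Hres u v Hu) as Hres_u.
  pose proof (lw_residual_n_eq_0 _ _ _ _ _ _ _ Hab m n v0 v1 Hv01 (Hrpos u Hu) Hres_u) as Hn.
  pose proof (lw_residual_m_eq_m1 _ _ _ _ _ _ _ Hab m n v0 v1 Hv01 (Hrpos u Hu) Hres_u Hm0) as Hm.
  subst m n; apply riemann_alternative_of_ode; auto; intros x Hx.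
  apply (mean_num_vanishing _ _ _ _ _ _ _ v0 v1 Hv01); intros v Hv.
  apply (pow_eq_0 _ 2); pose proof (Hres x v Hx Hv) as E; rewrite lw_residual_minimal in E; lra.
- left; apply revolution_of_Derive_0; auto; intros u Hu.
  assert (H0 : Derive a u ^ 2 + Derive b u ^ 2 = 0) by (apply NNPP; intro; apply Hrev; eauto).
  split; nra.
Qed.
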